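(* Let $(D(E))$ be a free set with $D(E)\subseteq\mathcal{B}(E)^k$ for all Hilbert spaces $E$, and let $F:D(E)\to\mathcal{B}(E)$ be a free function. Then $F$ is real operator monotone if and only if $$F(X)=G(\Re X)+\mathrm{i}\,H(\Re X,\Im X)\qquad (X\in D(E)),$$ where $H:\{(\Re X,\Im X):X\in D(E)\}\to\mathbb{S}(E)$ is a free function and $G:\{\Re X:X\in D(E)\}\to\mathbb{S}(E)$ is an operator monotone free function (i.e. $G(A)\leq G(B)$ whenever $A_i\leq B_i$ in the Loewner order for all $i$).
   Context: $\mathcal{B}(E)$: bounded operators on a Hilbert space $E$; $\mathbb{S}(E)$: self-adjoint ones, with the Loewner order. $\Re X=(X+X^* )/2$, $\Im X=(X-X^* )/(2i)$, entrywise for tuples. $X\geq_{\mathrm{Re}}0$ means $\Re X\geq0$ (entrywise for tuples); $A\leq_{\mathrm{Re}}B$ means $B-A\geq_{\mathrm{Re}}0$. A free set is a collection $(D(E))$ with $U^*D(E)U\subseteq D(K)$ for all unitaries $U:K\to E$ (where $U^*XU=(U^*X_1U,\dots,U^*X_kU)$) and $D(E)\oplus D(K)\subseteq D(E\oplus K)$. A free function (on any such collection of tuples) satisfies $F(U^*A_1U,\dots)=U^*F(A)U$ for unitaries $U$ and $F(A_1\oplus B_1,\dots)=F(A)\oplus F(B)$. $F$ is real operator monotone if $A\leq_{\mathrm{Re}}B$ in $D(E)$ implies $F(A)\leq_{\mathrm{Re}}F(B)$, for every $E$. *)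

From Stdlib Require Import Reals Lra Psatz.
From Stdlib Require Vectors.Fin.
Open Scope R_scope.

Record C := mkC { Cre : R; Cim : R }.
Definition Cadd (a b : C) := mkC (Cre a + Cre b) (Cim a + Cim b).
Definition Cmul (a b : C) :=
  mkC (Cre a * Cre b - Cim a * Cim b) (Cre a * Cim b + Cim a * Cre b).
Definition Cconj (a : C) := mkC (Cre a) (- Cim a).
Definition C0 := mkC 0 0.
Definition C1 := mkC 1 0.
Definition Ci := mkC 0 1.
Definition Cm1 := mkC (-1) 0.
Definition Chalf := mkC (1/2) 0.
Definition Cinv2i := mkC 0 (-(1/2)).
Definition Cnorm2 (a : C) := Cre a * Cre a + Cim a * Cim a.

Lemma C_ext (a b : C) : Cre a = Cre b -> Cim a = Cim b -> a = b.
Proof. destruct a, b; simpl; intros; subst; reflexivity. Qed.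

(* Complex Hilbert spaces (inner product linear in the first argument) *)
Record Hilb := {
  hcar :> Type;
  hzero : hcar;
  hadd : hcar -> hcar -> hcar;
  hopp : hcar -> hcar;
  hscal : C -> hcar -> hcar;
  hip : hcar -> hcar -> C;
  hadd_assoc : forall x y z, hadd x (hadd y z) = hadd (hadd x y) z;
  hadd_comm : forall x y, hadd x y = hadd y x;
  hadd_zero : forall x, hadd x hzero = x;
  hadd_opp : forall x, hadd x (hopp x) = hzero;
  hscal_assoc : forall a b x, hscal a (hscal b x) = hscal (Cmul a b) x;
  hscal_one : forall x, hscal C1 x = x;
  hscal_addv : forall a x y, hscal a (hadd x y) = hadd (hscal a x) (hscal a y);
  hscal_adds : forall a b x, hscal (Cadd a b) x = hadd (hscal a x) (hscal b x);
  hip_addl : forall x y z, hip (hadd x y) z = Cadd (hip x z) (hip y z);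
  hip_scall : forall a x y, hip (hscal a x) y = Cmul a (hip x y);
  hip_sym : forall x y, hip y x = Cconj (hip x y);
  hip_pos : forall x, 0 <= Cre (hip x x);
  hip_def : forall x, hip x x = C0 -> x = hzero;
  hcomplete : forall u : nat -> hcar,
    (forall eps, eps > 0 -> exists N, forall n m, (n >= N)%nat -> (m >= N)%nat ->
        sqrt (Cre (hip (hadd (u n) (hopp (u m))) (hadd (u n) (hopp (u m))))) < eps) ->
    exists l, forall eps, eps > 0 -> exists N, forall n, (n >= N)%nat ->
        sqrt (Cre (hip (hadd (u n) (hopp l)) (hadd (u n) (hopp l)))) < eps
}.
Arguments hzero {_}. Arguments hadd {_}. Arguments hopp {_}.
Arguments hscal {_}. Arguments hip {_}.

Section HilbLemmas.
Variable H : Hilb.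

Lemma ip_addr (x y z : H) : hip x (hadd y z) = Cadd (hip x y) (hip x z).
Proof.
  rewrite (hip_sym H (hadd y z) x), hip_addl, (hip_sym H y x), (hip_sym H z x).
  destruct (hip y x), (hip z x); apply C_ext; simpl; ring.
Qed.

Lemma ip_scalr a (x y : H) : hip x (hscal a y) = Cmul (Cconj a) (hip x y).
Proof.
  rewrite (hip_sym H (hscal a y) x), hip_scall, (hip_sym H y x).
  destruct a, (hip y x); apply C_ext; simpl; ring.
Qed.

Lemma ip_self_im (x : H) : Cim (hip x x) = 0.
Proof. pose proof (hip_sym H x x) as E. apply (f_equal Cim) in E. simpl in E. lra. Qed.

Lemma ip_scal_self a (x : H) :
  Cre (hip (hscal a x) (hscal a x)) = Cnorm2 a * Cre (hip x x).
Proof.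
  rewrite hip_scall, ip_scalr. pose proof (ip_self_im x) as Hi.
  destruct (hip x x) as [p q]; simpl in *; subst; unfold Cnorm2; ring.
Qed.

Lemma add_swap4 (p q r s : H) :
  hadd (hadd p q) (hadd r s) = hadd (hadd p r) (hadd q s).
Proof.
  rewrite <- !hadd_assoc. f_equal. rewrite !hadd_assoc. f_equal. apply hadd_comm.
Qed.

Lemma scal_comm a b (x : H) : hscal a (hscal b x) = hscal b (hscal a x).
Proof.
  rewrite !hscal_assoc. f_equal. apply C_ext; simpl; ring.
Qed.

Lemma parallelogram_bound (u v : H) :
  Cre (hip (hadd u v) (hadd u v)) <= 2 * Cre (hip u u) + 2 * Cre (hip v v).
Proof.
  pose proof (hip_pos H (hadd u (hscal Cm1 v))) as P.
  rewrite !hip_addl, !ip_addr, !hip_scall, !ip_scalr in P.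
  rewrite !hip_addl, !ip_addr.
  destruct (hip u u), (hip u v), (hip v u), (hip v v); simpl in *. lra.
Qed.
End HilbLemmas.

(* An element of B(E,K) is stored together
   with its adjoint (which exists and is unique and bounded by the Riesz
   representation theorem); boundedness is stated as ||Tx||^2 <= M ||x||^2. *)
Definition bounded {E K : Hilb} (f : E -> K) :=
  exists M, 0 <= M /\ forall x, Cre (hip (f x) (f x)) <= M * Cre (hip x x).
Definition linear {E K : Hilb} (f : E -> K) :=
  forall a x y, f (hadd (hscal a x) y) = hadd (hscal a (f x)) (f y).

Record Bop (E K : Hilb) := mkBop {
  bapp :> E -> K;
  badj : K -> E;
  bapp_lin : linear bapp;
  badj_lin : linear badj;
  bapp_bnd : bounded bapp;
  badj_bnd : bounded badj;
  badj_spec : forall x y, hip (bapp x) y = hip x (badj y)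
}.
Arguments bapp {E K}. Arguments badj {E K}.

Section Ops.
Context {E K S : Hilb}.

Definition bid_lin : linear (fun x : E => x). Proof. intros a x y; reflexivity. Qed.
Definition bid_bnd : bounded (fun x : E => x).
Proof. exists 1; split; [lra | intros; lra]. Qed.
Definition bid : Bop E E :=
  mkBop E E (fun x => x) (fun x => x) bid_lin bid_lin bid_bnd bid_bnd
        (fun x y => eq_refl).

Definition bstar_spec (A : Bop E K) :
  forall (y : K) (x : E), hip (badj A y) x = hip y (A x).
Proof.
  intros y x. rewrite (hip_sym E x (badj A y)), <- badj_spec, (hip_sym K (A x) y).
  reflexivity.
Qed.
Definition bstar (A : Bop E K) : Bop K E :=
  mkBop K E (badj A) (bapp A) (badj_lin _ _ A) (bapp_lin _ _ A)
        (badj_bnd _ _ A) (bapp_bnd _ _ A) (bstar_spec A).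

Lemma comp_lin (f : K -> S) (g : E -> K) :
  linear f -> linear g -> linear (fun x => f (g x)).
Proof. intros Hf Hg a x y. rewrite Hg, Hf. reflexivity. Qed.
Lemma comp_bnd (f : K -> S) (g : E -> K) :
  bounded f -> bounded g -> bounded (fun x => f (g x)).
Proof.
  intros [M1 [H1 B1]] [M2 [H2 B2]]. exists (M1 * M2). split; [nra|].
  intros x. eapply Rle_trans; [apply B1|].
  rewrite Rmult_assoc. apply Rmult_le_compat_l; auto.
Qed.
End Ops.

Definition bcomp {E K S : Hilb} (A : Bop K S) (B : Bop E K) : Bop E S.
Proof.
  refine (mkBop E S (fun x => A (B x)) (fun z => badj B (badj A z))
    (comp_lin _ _ (bapp_lin _ _ A) (bapp_lin _ _ B))
    (comp_lin _ _ (badj_lin _ _ B) (badj_lin _ _ A))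
    (comp_bnd _ _ (bapp_bnd _ _ A) (bapp_bnd _ _ B))
    (comp_bnd _ _ (badj_bnd _ _ B) (badj_bnd _ _ A)) _).
  intros x z. rewrite badj_spec, badj_spec. reflexivity.
Defined.

Section Ops2.
Context {E K : Hilb}.

Lemma add_lin (f g : E -> K) :
  linear f -> linear g -> linear (fun x => hadd (f x) (g x)).
Proof.
  intros Hf Hg a x y. rewrite Hf, Hg, hscal_addv. apply add_swap4.
Qed.
Lemma add_bnd (f g : E -> K) :
  bounded f -> bounded g -> bounded (fun x => hadd (f x) (g x)).
Proof.
  intros [M1 [H1 B1]] [M2 [H2 B2]]. exists (2 * M1 + 2 * M2). split; [lra|].
  intros x. eapply Rle_trans; [apply parallelogram_bound|].
  specialize (B1 x). specialize (B2 x). nra.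
Qed.
Lemma scal_lin c (f : E -> K) : linear f -> linear (fun x => hscal c (f x)).
Proof.
  intros Hf a x y. rewrite Hf, hscal_addv, scal_comm. reflexivity.
Qed.
Lemma scal_bnd c (f : E -> K) : bounded f -> bounded (fun x => hscal c (f x)).
Proof.
  intros [M [HM B]]. exists (Cnorm2 c * M).
  assert (0 <= Cnorm2 c) by (unfold Cnorm2; nra). split; [nra|].
  intros x. rewrite ip_scal_self, Rmult_assoc. apply Rmult_le_compat_l; auto.
Qed.
End Ops2.

Definition badd {E K : Hilb} (A B : Bop E K) : Bop E K.
Proof.
  refine (mkBop E K (fun x => hadd (A x) (B x)) (fun y => hadd (badj A y) (badj B y))
    (add_lin _ _ (bapp_lin _ _ A) (bapp_lin _ _ B))
    (add_lin _ _ (badj_lin _ _ A) (badj_lin _ _ B))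
    (add_bnd _ _ (bapp_bnd _ _ A) (bapp_bnd _ _ B))
    (add_bnd _ _ (badj_bnd _ _ A) (badj_bnd _ _ B)) _).
  intros x y. rewrite hip_addl, ip_addr, !badj_spec. reflexivity.
Defined.

Definition bscal {E K : Hilb} (c : C) (A : Bop E K) : Bop E K.
Proof.
  refine (mkBop E K (fun x => hscal c (A x)) (fun y => hscal (Cconj c) (badj A y))
    (scal_lin c _ (bapp_lin _ _ A)) (scal_lin (Cconj c) _ (badj_lin _ _ A))
    (scal_bnd c _ (bapp_bnd _ _ A)) (scal_bnd (Cconj c) _ (badj_bnd _ _ A)) _).
  intros x y. rewrite hip_scall, ip_scalr, badj_spec.
  f_equal. apply C_ext; simpl; ring.
Defined.

Definition bsub {E K : Hilb} (A B : Bop E K) : Bop E K := badd A (bscal Cm1 B).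
Definition bre {E : Hilb} (A : Bop E E) : Bop E E := bscal Chalf (badd A (bstar A)).
Definition bim {E : Hilb} (A : Bop E E) : Bop E E := bscal Cinv2i (bsub A (bstar A)).

Definition selfadj {E : Hilb} (A : Bop E E) : Prop := forall x, badj A x = bapp A x.
Definition bpos {E : Hilb} (A : Bop E E) : Prop := forall x, 0 <= Cre (hip (A x) x).
Definition loewner {E : Hilb} (A B : Bop E E) : Prop := bpos (bsub B A).
Definition le_re {E : Hilb} (A B : Bop E E) : Prop := bpos (bre (bsub B A)).

Definition tup (I : Type) (E : Hilb) := I -> Bop E E.

Definition unitary {K E : Hilb} (U : Bop K E) : Prop :=
  (forall x, badj U (U x) = x) /\ (forall y, U (badj U y) = y).

Definition conjU {K E : Hilb} (U : Bop K E) (X : Bop E E) : Bop K K :=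
  bcomp (bstar U) (bcomp X U).

(* S is (an internal model of) E (+) K: J1 : E -> S, J2 : K -> S are the
   canonical injections, i.e. isometries with J1 J1^* + J2 J2^* = I. *)
Definition dsum_embedding {E K S : Hilb} (J1 : Bop E S) (J2 : Bop K S) : Prop :=
  (forall x, badj J1 (J1 x) = x) /\ (forall y, badj J2 (J2 y) = y) /\
  (forall z, hadd (J1 (badj J1 z)) (J2 (badj J2 z)) = z).

Definition dsum {E K S : Hilb} (J1 : Bop E S) (J2 : Bop K S)
  (A : Bop E E) (B : Bop K K) : Bop S S :=
  badd (bcomp J1 (bcomp A (bstar J1))) (bcomp J2 (bcomp B (bstar J2))).

Definition free_set {I : Type} (D : forall E : Hilb, tup I E -> Prop) : Prop :=
  (forall (E K : Hilb) (U : Bop K E) (X : tup I E),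
      unitary U -> D E X -> D K (fun i => conjU U (X i))) /\
  (forall (E K S : Hilb) (J1 : Bop E S) (J2 : Bop K S) (X : tup I E) (Y : tup I K),
      dsum_embedding J1 J2 -> D E X -> D K Y ->
      D S (fun i => dsum J1 J2 (X i) (Y i))).

Definition free_fun {I : Type} (D : forall E : Hilb, tup I E -> Prop)
  (F : forall E : Hilb, tup I E -> Bop E E) : Prop :=
  (forall (E K : Hilb) (U : Bop K E) (X : tup I E),
      unitary U -> D E X -> F K (fun i => conjU U (X i)) = conjU U (F E X)) /\
  (forall (E K S : Hilb) (J1 : Bop E S) (J2 : Bop K S) (X : tup I E) (Y : tup I K),
      dsum_embedding J1 J2 -> D E X -> D K Y ->
      F S (fun i => dsum J1 J2 (X i) (Y i)) = dsum J1 J2 (F E X) (F K Y)).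

Definition real_op_monotone {I : Type} (D : forall E : Hilb, tup I E -> Prop)
  (F : forall E : Hilb, tup I E -> Bop E E) : Prop :=
  forall (E : Hilb) (A B : tup I E), D E A -> D E B ->
    (forall i, le_re (A i) (B i)) -> le_re (F E A) (F E B).

Definition op_monotone {I : Type} (D : forall E : Hilb, tup I E -> Prop)
  (G : forall E : Hilb, tup I E -> Bop E E) : Prop :=
  forall (E : Hilb) (A B : tup I E), D E A -> D E B ->
    (forall i, loewner (A i) (B i)) -> loewner (G E A) (G E B).

Definition tre {k : nat} {E : Hilb} (X : tup (Fin.t k) E) : tup (Fin.t k) E :=
  fun i => bre (X i).
Definition treim {k : nat} {E : Hilb} (X : tup (Fin.t k) E)
  : tup (Fin.t k + Fin.t k) E :=
  fun s => match s with inl i => bre (X i) | inr i => bim (X i) end.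

Definition Dre {k : nat} (D : forall E : Hilb, tup (Fin.t k) E -> Prop)
  : forall E : Hilb, tup (Fin.t k) E -> Prop :=
  fun E A => exists X, D E X /\ A = tre X.
Definition Dreim {k : nat} (D : forall E : Hilb, tup (Fin.t k) E -> Prop)
  : forall E : Hilb, tup (Fin.t k + Fin.t k) E -> Prop :=
  fun E P => exists X, D E X /\ P = treim X.

(* Applying real monotonicity in both directions to two tuples with the same
   real part shows that Re F(X) depends only on Re X, so it factors as G(Re X);
   Im F(X) factors through the injective map X |-> (Re X, Im X) as H.  Both
   inherit freeness from F because Re and Im commute with unitary conjugation
   and with direct sums, and G is monotone because A <=_Re B is the Loewner
   order between Re A and Re B.  Conversely, for self-adjoint H the quadratic
   forms of G + iH and G have the same real part, so real monotonicity of F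
   reduces to monotonicity of G. *)
From Pilot Require Import Defs.
From Stdlib Require Import Reals Lra.
From Stdlib Require Vectors.Fin.
From Stdlib Require Import FunctionalExtensionality ProofIrrelevance ClassicalEpsilon.
Open Scope R_scope.

Lemma hscal_C0 (E : Hilb) (x : E) : hscal Defs.C0 x = hzero.
Proof.
  set (t := hscal Defs.C0 x).
  assert (Ht : t = hadd t t).
  { unfold t. rewrite <- hscal_adds. f_equal. apply C_ext; simpl; ring. }
  rewrite <- (hadd_opp E t). rewrite Ht at 2.
  rewrite <- hadd_assoc, hadd_opp, hadd_zero. reflexivity.
Qed.

Lemma hvec_ext (E : Hilb) (u w : E) : (forall z, hip u z = hip w z) -> u = w.
Proof.
  intros Hz. set (d := hadd u (hscal Cm1 w)).
  assert (Hd : d = hzero).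
  { apply hip_def. unfold d at 1. rewrite hip_addl, hip_scall, Hz.
    destruct (hip w d); apply C_ext; simpl; ring. }
  assert (Hu : u = hadd d w).
  { unfold d. rewrite <- hadd_assoc.
    rewrite <- (hscal_one E w) at 2. rewrite <- hscal_adds.
    replace (Cadd Cm1 Defs.C1) with Defs.C0 by (apply C_ext; simpl; ring).
    rewrite hscal_C0, hadd_zero. reflexivity. }
  rewrite Hu, Hd, hadd_comm, hadd_zero. reflexivity.
Qed.

Lemma Bop_ext (E K : Hilb) (A B : Bop E K) :
  (forall x, A x = B x) -> (forall y, badj A y = badj B y) -> A = B.
Proof.
  destruct A as [a a' l1 l2 b1 b2 s], B as [c c' m1 m2 d1 d2 t]; simpl; intros H1 H2.
  assert (a = c) by (apply functional_extensionality; auto).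
  assert (a' = c') by (apply functional_extensionality; auto).
  subst. f_equal; apply proof_irrelevance.
Qed.

Ltac vnorm := repeat (rewrite ?hip_addl, ?hip_scall, ?badj_spec, ?bstar_spec).
Ltac bop_eq := apply Bop_ext; intro; apply hvec_ext; intro; simpl; vnorm;
               apply C_ext; simpl; lra.

Lemma bapp_add (E K : Hilb) (A : Bop E K) x y : A (hadd x y) = hadd (A x) (A y).
Proof. apply hvec_ext; intro z; vnorm. reflexivity. Qed.

Lemma bapp_scal (E K : Hilb) (A : Bop E K) a x : A (hscal a x) = hscal a (A x).
Proof. apply hvec_ext; intro z; vnorm. reflexivity. Qed.

Section ReIm.
Context {E : Hilb}.

Lemma bre_conjU (K : Hilb) (U : Bop K E) (X : Bop E E) :
  bre (conjU U X) = conjU U (bre X).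
Proof. bop_eq. Qed.

Lemma bim_conjU (K : Hilb) (U : Bop K E) (X : Bop E E) :
  bim (conjU U X) = conjU U (bim X).
Proof. bop_eq. Qed.

Lemma bre_dsum (K S : Hilb) (J1 : Bop E S) (J2 : Bop K S) A B :
  bre (dsum J1 J2 A B) = dsum J1 J2 (bre A) (bre B).
Proof. bop_eq. Qed.

Lemma bim_dsum (K S : Hilb) (J1 : Bop E S) (J2 : Bop K S) A B :
  bim (dsum J1 J2 A B) = dsum J1 J2 (bim A) (bim B).
Proof. bop_eq. Qed.

Lemma bre_bim_decomp (A : Bop E E) : A = badd (bre A) (bscal Ci (bim A)).
Proof. bop_eq. Qed.

Lemma bre_selfadj (A : Bop E E) : selfadj (bre A).
Proof. intro x. apply hvec_ext; intro; simpl; vnorm; apply C_ext; simpl; lra. Qed.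

Lemma bim_selfadj (A : Bop E E) : selfadj (bim A).
Proof. intro x. apply hvec_ext; intro; simpl; vnorm; apply C_ext; simpl; lra. Qed.

Lemma form_bre (T : Bop E E) v : Cre (hip (bre T v) v) = Cre (hip (T v) v).
Proof.
  simpl. rewrite hip_scall, hip_addl, bstar_spec, (hip_sym E v (T v)).
  simpl. lra.
Qed.

Lemma form_bsub (A B : Bop E E) v :
  Cre (hip (bsub B A v) v) = Cre (hip (B v) v) - Cre (hip (A v) v).
Proof. simpl. rewrite hip_addl, hip_scall. simpl. lra. Qed.

Lemma le_re_form (A B : Bop E E) :
  le_re A B <-> forall v, Cre (hip (A v) v) <= Cre (hip (B v) v).
Proof.
  unfold le_re, bpos. split; intros H v; specialize (H v);
    rewrite form_bre, form_bsub in *; lra.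
Qed.

Lemma loewner_form (A B : Bop E E) :
  loewner A B <-> forall v, Cre (hip (A v) v) <= Cre (hip (B v) v).
Proof.
  unfold loewner, bpos. split; intros H v; specialize (H v);
    rewrite form_bsub in *; lra.
Qed.

Lemma loewner_refl (A : Bop E E) : loewner A A.
Proof. apply loewner_form. intro; apply Rle_refl. Qed.

Lemma le_re_loewner_bre (A B : Bop E E) : le_re A B <-> loewner (bre A) (bre B).
Proof. rewrite le_re_form, loewner_form. setoid_rewrite form_bre. reflexivity. Qed.

Lemma selfadj_form_im (T : Bop E E) v : selfadj T -> Cim (hip (T v) v) = 0.
Proof.
  intro S. assert (H1 : hip (T v) v = hip v (T v)) by (rewrite badj_spec, S; reflexivity).
  rewrite (hip_sym E (T v) v) in H1. apply (f_equal Cim) in H1. simpl in H1. lra.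
Qed.

Lemma form_add_iselfadj (G H : Bop E E) v : selfadj H ->
  Cre (hip (badd G (bscal Ci H) v) v) = Cre (hip (G v) v).
Proof.
  intro S. pose proof (selfadj_form_im H v S).
  simpl. rewrite hip_addl, hip_scall. simpl. lra.
Qed.

(* Polarization: the real parts of <A(x+z), x+z> and <A(x+iz), x+iz> recover
   <(Re A) x, z>. *)
Lemma bre_eq_of_form (A B : Bop E E) :
  (forall w, Cre (hip (A w) w) = Cre (hip (B w) w)) -> bre A = bre B.
Proof.
  intro h.
  assert (Happ : forall x, bre A x = bre B x).
  { intro x. apply hvec_ext; intro z.
    pose proof (h x) as h1. pose proof (h z) as h2.
    pose proof (h (hadd x z)) as h3. pose proof (h (hadd x (hscal Ci z))) as h4.
    repeat rewrite ?bapp_add, ?bapp_scal, ?hip_addl, ?ip_addr, ?hip_scall, ?ip_scalr in h3.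
    repeat rewrite ?bapp_add, ?bapp_scal, ?hip_addl, ?ip_addr, ?hip_scall, ?ip_scalr in h4.
    simpl. rewrite !hip_scall, !hip_addl, !bstar_spec,
      (hip_sym E (A z) x), (hip_sym E (B z) x).
    apply C_ext; simpl in *; lra. }
  apply Bop_ext; [exact Happ|].
  intro y. rewrite (bre_selfadj A y), (bre_selfadj B y). apply Happ.
Qed.

End ReIm.

Section Tuples.
Context {k : nat} {E : Hilb}.

Lemma tre_conjU (K : Hilb) (U : Bop K E) (X : tup (Fin.t k) E) :
  tre (fun i => conjU U (X i)) = (fun i => conjU U (tre X i)).
Proof. extensionality i. apply bre_conjU. Qed.

Lemma treim_conjU (K : Hilb) (U : Bop K E) (X : tup (Fin.t k) E) :
  treim (fun i => conjU U (X i)) = (fun s => conjU U (treim X s)).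
Proof. extensionality s. destruct s; [apply bre_conjU | apply bim_conjU]. Qed.

Lemma tre_dsum (K S : Hilb) (J1 : Bop E S) (J2 : Bop K S)
  (X : tup (Fin.t k) E) (Y : tup (Fin.t k) K) :
  tre (fun i => dsum J1 J2 (X i) (Y i)) = (fun i => dsum J1 J2 (tre X i) (tre Y i)).
Proof. extensionality i. apply bre_dsum. Qed.

Lemma treim_dsum (K S : Hilb) (J1 : Bop E S) (J2 : Bop K S)
  (X : tup (Fin.t k) E) (Y : tup (Fin.t k) K) :
  treim (fun i => dsum J1 J2 (X i) (Y i))
  = (fun s => dsum J1 J2 (treim X s) (treim Y s)).
Proof. extensionality s. destruct s; [apply bre_dsum | apply bim_dsum]. Qed.

Lemma treim_inj (X Y : tup (Fin.t k) E) : treim X = treim Y -> X = Y.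
Proof.
  intro H. extensionality i.
  rewrite (bre_bim_decomp (X i)), (bre_bim_decomp (Y i)).
  pose proof (f_equal (fun P => P (inl i)) H) as H1.
  pose proof (f_equal (fun P => P (inr i)) H) as H2.
  simpl in H1, H2. rewrite H1, H2. reflexivity.
Qed.

End Tuples.

(* Outside the image of [g] the value [c0] is arbitrary. *)
Definition factor_through {A B T : Type} (P : A -> Prop) (g : A -> B) (f : A -> T)
  (c0 : T) (b : B) : T :=
  match excluded_middle_informative (exists a, P a /\ b = g a) with
  | left h => f (proj1_sig (constructive_indefinite_description _ h))
  | right _ => c0
  end.

Lemma factor_throughE {A B T : Type} (P : A -> Prop) (g : A -> B) (f : A -> T) c0 :
  (forall a a', P a -> P a' -> g a = g a' -> f a = f a') ->
  forall a, P a -> factor_through P g f c0 (g a) = f a.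
Proof.
  intros Hf a Ha. unfold factor_through.
  destruct excluded_middle_informative as [h | n]; [| exfalso; eauto].
  destruct (constructive_indefinite_description _ h) as [a' [Ha' Hg]]; simpl.
  apply Hf; auto.
Qed.

Section Decomposition.
Variable k : nat.
Variable D : forall E : Hilb, tup (Fin.t k) E -> Prop.
Variable F : forall E : Hilb, tup (Fin.t k) E -> Bop E E.

Lemma real_op_monotone_bre_eq : real_op_monotone D F ->
  forall E (X Y : tup (Fin.t k) E),
  D E X -> D E Y -> tre X = tre Y -> bre (F E X) = bre (F E Y).
Proof.
  intros RM E X Y HX HY Ht.
  assert (Hre : forall i, bre (X i) = bre (Y i))
    by exact (fun i => f_equal (fun T => T i) Ht).
  assert (le_XY : forall i, le_re (X i) (Y i))
    by (intro i; apply le_re_loewner_bre; rewrite Hre; apply loewner_refl).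
  assert (le_YX : forall i, le_re (Y i) (X i))
    by (intro i; apply le_re_loewner_bre; rewrite Hre; apply loewner_refl).
  pose proof (proj1 (le_re_form _ _) (RM E X Y HX HY le_XY)) as H1.
  pose proof (proj1 (le_re_form _ _) (RM E Y X HY HX le_YX)) as H2.
  apply bre_eq_of_form. intro w. specialize (H1 w). specialize (H2 w). lra.
Qed.

Lemma real_op_monotone_of_decomp
  (G : forall E : Hilb, tup (Fin.t k) E -> Bop E E)
  (H : forall E : Hilb, tup (Fin.t k + Fin.t k) E -> Bop E E) :
  op_monotone (Dre D) G ->
  (forall E P, Dreim D E P -> selfadj (H E P)) ->
  (forall E X, D E X -> F E X = badd (G E (tre X)) (bscal Ci (H E (treim X)))) ->
  real_op_monotone D F.
Proof.
  intros hGm hHs hEq E A B HA HB Hle.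
  assert (HsA : selfadj (H E (treim A))) by (apply hHs; exists A; auto).
  assert (HsB : selfadj (H E (treim B))) by (apply hHs; exists B; auto).
  assert (Hm : loewner (G E (tre A)) (G E (tre B))).
  { apply hGm; [exists A | exists B | intro i; apply le_re_loewner_bre]; auto. }
  rewrite (hEq E A HA), (hEq E B HB). apply le_re_form. intro v.
  rewrite !form_add_iselfadj by assumption. exact (proj1 (loewner_form _ _) Hm v).
Qed.

Hypothesis D_free : free_set D.
Hypothesis F_free : free_fun D F.
Hypothesis F_mono : real_op_monotone D F.

Definition reF (E : Hilb) : tup (Fin.t k) E -> Bop E E :=
  factor_through (D E) tre (fun X => bre (F E X)) bid.

Definition imF (E : Hilb) : tup (Fin.t k + Fin.t k) E -> Bop E E :=
  factor_through (D E) treim (fun X => bim (F E X)) bid.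

Lemma reF_tre E X : D E X -> reF E (tre X) = bre (F E X).
Proof.
  intro HX. unfold reF. apply (factor_throughE _ _ (fun Y => bre (F E Y))); [| exact HX].
  exact (real_op_monotone_bre_eq F_mono E).
Qed.

Lemma imF_treim E X : D E X -> imF E (treim X) = bim (F E X).
Proof.
  intro HX. unfold imF. apply (factor_throughE _ _ (fun Y => bim (F E Y))); [| exact HX].
  intros X1 X2 _ _ HX12. apply treim_inj in HX12. congruence.
Qed.

Lemma reF_free : free_fun (Dre D) reF.
Proof.
  destruct D_free as [hD1 hD2], F_free as [hF1 hF2]. split.
  - intros E K U A HU [X [HX ->]].
    rewrite <- tre_conjU, !reF_tre, hF1 by auto. apply bre_conjU.
  - intros E K S J1 J2 A B HJ [X [HX ->]] [Y [HY ->]].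
    rewrite <- tre_dsum, !reF_tre, hF2 by auto. apply bre_dsum.
Qed.

Lemma imF_free : free_fun (Dreim D) imF.
Proof.
  destruct D_free as [hD1 hD2], F_free as [hF1 hF2]. split.
  - intros E K U A HU [X [HX ->]].
    rewrite <- treim_conjU, !imF_treim, hF1 by auto. apply bim_conjU.
  - intros E K S J1 J2 A B HJ [X [HX ->]] [Y [HY ->]].
    rewrite <- treim_dsum, !imF_treim, hF2 by auto. apply bim_dsum.
Qed.

Lemma reF_op_monotone : op_monotone (Dre D) reF.
Proof.
  intros E A B [X [HX ->]] [Y [HY ->]] Hl.
  rewrite !reF_tre by assumption. apply le_re_loewner_bre, F_mono; auto.
  intro i. apply le_re_loewner_bre, Hl.
Qed.

Lemma reF_selfadj E A : Dre D E A -> selfadj (reF E A).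
Proof. intros [X [HX ->]]. rewrite reF_tre by assumption. apply bre_selfadj. Qed.

Lemma imF_selfadj E P : Dreim D E P -> selfadj (imF E P).
Proof. intros [X [HX ->]]. rewrite imF_treim by assumption. apply bim_selfadj. Qed.

Lemma reF_imF_decomp E X :
  D E X -> F E X = badd (reF E (tre X)) (bscal Ci (imF E (treim X))).
Proof. intro HX. rewrite reF_tre, imF_treim by assumption. apply bre_bim_decomp. Qed.

End Decomposition.

Theorem mainTheorem9 (k : nat)
  (D : forall E : Hilb, tup (Fin.t k) E -> Prop)
  (F : forall E : Hilb, tup (Fin.t k) E -> Bop E E) :
  free_set D -> free_fun D F ->
  (real_op_monotone D F <->
   exists (G : forall E : Hilb, tup (Fin.t k) E -> Bop E E)
          (H : forall E : Hilb, tup (Fin.t k + Fin.t k) E -> Bop E E),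
     free_fun (Dre D) G /\
     (forall (E : Hilb) (A : tup (Fin.t k) E), Dre D E A -> selfadj (G E A)) /\
     op_monotone (Dre D) G /\
     free_fun (Dreim D) H /\
     (forall (E : Hilb) (P : tup (Fin.t k + Fin.t k) E), Dreim D E P -> selfadj (H E P)) /\
     (forall (E : Hilb) (X : tup (Fin.t k) E), D E X ->
        F E X = badd (G E (tre X)) (bscal Ci (H E (treim X))))).
Proof.
  intros D_free F_free. split.
  - intro F_mono. exists (reF k D F), (imF k D F).
    split; [apply reF_free; assumption |].
    split; [apply reF_selfadj; assumption |].
    split; [apply reF_op_monotone; assumption |].
    split; [apply imF_free; assumption |].
    split; [apply imF_selfadj |].
    apply reF_imF_decomp; assumption.
  - intros [G [H [_ [_ [hGm [_ [hHs hEq]]]]]]].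
    exact (real_op_monotone_of_decomp k D F G H hGm hHs hEq).
Qed.
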